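(* Let $\tau:\mathbb{F}_p((t))^d\to\mathbb{F}_p((t))^d$, $(f_1,\dots,f_d)\mapsto(tf_1,\dots,tf_d)$, and let $\phi:\mathbb{F}_p((t))\to\mathrm{Aut}(\mathbb{F}_p((t))^d)$ be a continuous homomorphism satisfying $\phi(tf)=\tau\circ\phi(f)\circ\tau^{-1}$ for all $f\in\mathbb{F}_p((t))$. Then there is a compact open subgroup $V\le\mathbb{F}_p((t))^d$ such that $\phi(f)(V)=V$ for every $f\in\mathbb{F}_p[[t]]$ and $\tau(V)$ is a proper subgroup of $V$.
   Context: $\mathbb{F}_p((t))$ is the additive group of formal Laurent series over $\mathbb{F}_p$ with its usual locally compact topology, $\mathbb{F}_p[[t]]$ the compact open subgroup of power series. $\mathrm{Aut}(\mathbb{F}_p((t))^d)$ is the group of automorphisms of the topological group $(\mathbb{F}_p((t))^d,+)$ with the Braconnier topology: the group topology with basis of identity neighbourhoods $\{\alpha:\alpha(x)-x\in U,\ \alpha^{-1}(x)-x\in U\ \forall x\in K\}$, $K$ compact, $U$ an identity neighbourhood. *)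

From mathcomp Require Import all_boot all_order all_algebra.
From mathcomp Require Import zify.
Set Implicit Arguments. Unset Strict Implicit. Unset Printing Implicit Defensive.
Import Order.TTheory GRing.Theory Num.Theory.
Local Open Scope ring_scope.

Section Laurent.
Variable p : nat.

(* F_p((t)) : coefficient functions int -> F_p with support bounded below;
   the series is  sum_k coef k * t^k. *)
Record laurent := Laurent {
  coef :> int -> 'F_p ;
  coef_lb : exists N : int, forall k : int, k < N -> coef k = 0 }.

Lemma lzero_lb : exists N : int, forall k : int, k < N -> (fun _ : int => (0 : 'F_p)) k = 0.
Proof. by exists 0. Qed.
Definition lzero : laurent := Laurent lzero_lb.

Lemma ladd_lb (f g : laurent) :
  exists N : int, forall k : int, k < N -> (fun k => f k + g k) k = 0.
Proof.
case: (coef_lb f) => Nf Hf; case: (coef_lb g) => Ng Hg.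
exists (Order.min Nf Ng) => k; rewrite lt_min => /andP [h1 h2] /=.
by rewrite Hf // Hg // addr0.
Qed.
Definition ladd (f g : laurent) : laurent := Laurent (ladd_lb f g).

Lemma lopp_lb (f : laurent) :
  exists N : int, forall k : int, k < N -> (fun k => - f k) k = 0.
Proof.
case: (coef_lb f) => N H; exists N => k hk /=; by rewrite H // oppr0.
Qed.
Definition lopp (f : laurent) : laurent := Laurent (lopp_lb f).
Definition lsub (f g : laurent) : laurent := ladd f (lopp g).

(* multiplication by t : coefficient of t^k in t*f is the coefficient of t^(k-1) in f *)
Lemma lmult_lb (f : laurent) :
  exists N : int, forall k : int, k < N -> (fun k => f (k - 1)) k = 0.
Proof.
case: (coef_lb f) => N H; exists (N + 1) => k hk /=; apply: H; lia.
Qed.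
Definition lmult (f : laurent) : laurent := Laurent (lmult_lb f).

Lemma ldivt_lb (f : laurent) :
  exists N : int, forall k : int, k < N -> (fun k => f (k + 1)) k = 0.
Proof.
case: (coef_lb f) => N H; exists (N - 1) => k hk /=; apply: H; lia.
Qed.
Definition ldivt (f : laurent) : laurent := Laurent (ldivt_lb f).

(* t^n F_p[[t]] : the basic identity neighbourhoods of F_p((t)) *)
Definition lball (n : int) (f : laurent) : Prop := forall k : int, k < n -> f k = 0.
Definition in_power_series (f : laurent) : Prop := lball 0 f.

Variable d : nat.
Definition lvec := 'I_d -> laurent.
Definition vadd (x y : lvec) : lvec := fun i => ladd (x i) (y i).
Definition vopp (x : lvec) : lvec := fun i => lopp (x i).
Definition vsub (x y : lvec) : lvec := vadd x (vopp y).
Definition vzero : lvec := fun _ => lzero.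

Definition tau (x : lvec) : lvec := fun i => lmult (x i).
Definition tauinv (x : lvec) : lvec := fun i => ldivt (x i).

Definition vball (n : int) (x : lvec) : Prop := forall i, lball n (x i).

Definition vopen (S : lvec -> Prop) : Prop :=
  forall x, S x -> exists n : int, forall y, vball n (vsub y x) -> S y.
Definition vcompact (K : lvec -> Prop) : Prop :=
  forall (I : Type) (W : I -> lvec -> Prop), (forall i, vopen (W i)) ->
    (forall x, K x -> exists i, W i x) ->
    exists s : seq I, forall x, K x -> exists2 i, List.In i s & W i x.
Definition id_nbhd (U : lvec -> Prop) : Prop := exists n : int, forall x, vball n x -> U x.

Definition vsubgroup (V : lvec -> Prop) : Prop :=
  V vzero /\ (forall x y, V x -> V y -> V (vadd x y)) /\ (forall x, V x -> V (vopp x)).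
Definition compact_open_subgroup (V : lvec -> Prop) : Prop :=
  vsubgroup V /\ vopen V /\ vcompact V.

Definition vcontinuous (a : lvec -> lvec) : Prop :=
  forall x (n : int), exists m : int, forall y, vball m (vsub y x) -> vball n (vsub (a y) (a x)).

Definition is_aut (a : lvec -> lvec) : Prop :=
  (forall x y, a (vadd x y) = vadd (a x) (a y)) /\
  exists b : lvec -> lvec, cancel a b /\ cancel b a /\ vcontinuous a /\ vcontinuous b.

(* basic identity neighbourhood of the Braconnier topology:
   alpha(x) - x in U and alpha^-1(x) - x in U for all x in K *)
Definition braconnier_nbhd (K U : lvec -> Prop) (a : lvec -> lvec) : Prop :=
  forall x, K x -> U (vsub (a x) x) /\ (forall y, a y = x -> U (vsub y x)).

(* continuity of phi : F_p((t)) -> Aut(F_p((t))^d) for the Braconnier topology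
   (neighbourhoods of phi f0 are the translates phi f0 o N, N basic) *)
Definition braconnier_continuous (phi : laurent -> lvec -> lvec) : Prop :=
  forall (f0 : laurent) (K U : lvec -> Prop), vcompact K -> id_nbhd U ->
    exists n : int, forall f, lball n (lsub f f0) ->
      exists g : lvec -> lvec, is_aut g /\ braconnier_nbhd K U g /\
        forall x, phi f x = phi f0 (g x).

End Laurent.

From mathcomp Require Import all_boot all_order all_algebra zify.
From Stdlib Require Import Classical ProofIrrelevance FunctionalExtensionality IndefiniteDescription.
Set Implicit Arguments. Unset Strict Implicit. Unset Printing Implicit Defensive.
Import Order.TTheory GRing.Theory Num.Theory.
Local Open Scope ring_scope.

(* The subgroup V is a ball  (t^-k F_p[[t]])^d  for a suitable k.
   1. Balls (t^m F_p[[t]])^d are open subgroups, and they are compact: an open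
      cover of a ball without finite subcover yields, digit by digit, a nested
      sequence of uncovered cylinders whose common point lies in some open set
      of the cover, which then contains one of these cylinders (Koenig's lemma).
   2. tau^k maps the ball of level j onto the ball of level j + k; in particular
      tau maps every ball into itself but not onto it.
   3. Braconnier continuity of phi at 0, tested on the compact set K = U = the
      ball B_0 of level 0, gives n such that phi f stabilises B_0 whenever
      f ∈ t^n F_p[[t]].
   4. The equivariance  phi (t^k f) = tau^k o phi f o tau^-k  transports this:
      for k = |n| and f ∈ F_p[[t]], t^k f ∈ t^n F_p[[t]], so phi f stabilises
      tau^-k B_0 = B_{-k}.  Since phi f is bijective, phi f (B_{-k}) = B_{-k}. *)

Lemma laurent_ext p (f g : laurent p) : (forall k, f k = g k) -> f = g.
Proof.
case: f g => [cf hf] [cg hg] /= fg.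
have E : cf = cg by apply: functional_extensionality.
by subst cg; rewrite (proof_irrelevance _ hf hg).
Qed.

Lemma lvec_ext p d (x y : lvec p d) : (forall i k, x i k = y i k) -> x = y.
Proof. by move=> xy; apply: functional_extensionality => i; apply: laurent_ext. Qed.

Lemma vsub_ball p d m (x y : lvec p d) : vball m (vsub x y) -> vball m y -> vball m x.
Proof.
by move=> hxy hy i j hj; have := hxy i j hj; rewrite /= (hy i j hj) oppr0 addr0.
Qed.

Lemma vball_subgroup p d m : vsubgroup (@vball p d m).
Proof.
split=> //; split=> [x y hx hy | x hx] i j hj /=; first by rewrite hx // hy // addr0.
by rewrite hx // oppr0.
Qed.

Lemma vball_open p d m : vopen (@vball p d m).
Proof. by move=> x hx; exists m => y hy; apply: vsub_ball hy hx. Qed.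

Section BallCompact.
Variables (p d : nat) (m : int) (I : Type) (W : I -> lvec p d -> Prop).
Hypothesis W_open : forall i, vopen (W i).
Hypothesis W_cover : forall x, vball m x -> exists i, W i x.

Local Notation digit := {ffun 'I_d -> 'F_p}.

Definition cylinder (s : seq digit) (y : lvec p d) : Prop :=
  vball m y /\ forall (l : nat) i, (l < size s)%N -> y i (m + l%:Z) = nth 0 s l i.

Definition finitely_covered (s : seq digit) : Prop :=
  exists r : seq I, forall y, cylinder s y -> exists2 i, List.In i r & W i y.

(* A cylinder is the finite union of its one-digit extensions. *)
Lemma covered_extensions s :
  (forall c, finitely_covered (rcons s c)) -> finitely_covered s.
Proof.
move=> cov_ext.
have cov_some (L : seq digit) : exists r : seq I, forall y, cylinder s y ->
    [ffun i => y i (m + (size s)%:Z)] \in L -> exists2 i, List.In i r & W i y.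
  elim: L => [|c L [r2 cov2]]; first by exists [::].
  have [r1 cov1] := cov_ext c; exists (r1 ++ r2) => y ys.
  rewrite inE => /orP [/eqP yc | yL].
  - have [|i ir yi] := cov1 y.
      split=> [|l i l_lt]; first by case: ys.
      rewrite nth_rcons; move: l_lt; rewrite size_rcons ltnS leq_eqVlt.
      case/orP=> [/eqP -> | l_lt]; first by rewrite ltnn eqxx -yc ffunE.
      by rewrite l_lt; case: ys => _; apply.
    by exists i => //; apply: List.in_or_app; left.
  - have [i ir yi] := cov2 y ys yL.
    by exists i => //; apply: List.in_or_app; right.
have [r cov] := cov_some (enum digit).
by exists r => y ys; apply: cov => //; rewrite mem_enum.
Qed.

Lemma uncovered_extension s :
  exists c, ~ finitely_covered s -> ~ finitely_covered (rcons s c).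
Proof.
have [[c uc] | all_cov] := classic (exists c, ~ finitely_covered (rcons s c)).
  by exists c.
exists 0 => s_unc _; apply/s_unc/covered_extensions => c.
by apply: NNPP => uc; apply: all_cov; exists c.
Qed.

Definition next_digit (s : seq digit) : digit :=
  proj1_sig (constructive_indefinite_description _ (uncovered_extension s)).

Fixpoint branch (n : nat) : seq digit :=
  if n is n'.+1 then rcons (branch n') (next_digit (branch n')) else [::].

Lemma branchE n : branch n = mkseq (fun l => next_digit (branch l)) n.
Proof. by elim: n => [|n IH] //=; rewrite mkseqS -IH. Qed.

Lemma branch_uncovered : ~ finitely_covered [::] -> forall n, ~ finitely_covered (branch n).
Proof.
move=> unc0; elim=> [|n IH] //=.
by rewrite /next_digit; case: constructive_indefinite_description => c /= /(_ IH).
Qed.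

Lemma branch_limit_lb i : exists N : int, forall k : int, k < N ->
  (fun l => if l < m then 0 else next_digit (branch (absz (l - m))) i) k = 0.
Proof. by exists m => k k_lt /=; rewrite k_lt. Qed.

Definition branch_limit : lvec p d := fun i => Laurent (branch_limit_lb i).

Lemma branch_limit_in n : cylinder (branch n) branch_limit.
Proof.
split=> [i l l_lt | l i]; first by rewrite /= l_lt.
rewrite branchE size_mkseq /= => l_lt; rewrite nth_mkseq // ifF; last by lia.
by congr (next_digit (branch _) i); lia.
Qed.

(* The whole ball (the empty cylinder) is finitely covered: otherwise the open
   set of W containing branch_limit would contain a whole cylinder of the branch. *)
Lemma ball_covered : finitely_covered [::].
Proof.
apply: NNPP => unc0.
have [i Wi] := W_cover (proj1 (branch_limit_in 0)).
have [n ball_in_Wi] := W_open Wi.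
apply: (branch_uncovered unc0 (n := absz (n - m))).
exists [:: i] => y [ym ybranch].
exists i; first by left.
apply: ball_in_Wi => i' l l_lt /=.
have [l_m | m_l] := ltP l m; first by rewrite (ym i' l l_m) subr0.
have l_eq : l = m + (absz (l - m))%:Z by lia.
rewrite [in y i' l]l_eq ybranch; last by rewrite branchE size_mkseq; lia.
by rewrite branchE nth_mkseq ?subrr //; lia.
Qed.

End BallCompact.

Lemma vball_compact p d m : vcompact (@vball p d m).
Proof.
move=> I W W_open W_cover; have [r cov] := ball_covered W_open W_cover.
by exists r => x xm; apply: cov; split.
Qed.

Section Shift.
Variables (p d : nat).
Implicit Types (x : lvec p d) (f : laurent p).

Lemma lmult_iter_coef k f j : iter k (@lmult p) f j = f (j - k%:Z).
Proof. by elim: k j => [|k IH] j /=; [rewrite subr0 | rewrite IH; congr (f _); lia]. Qed.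

Lemma tau_iter_coef k x i j : iter k (@tau p d) x i j = x i (j - k%:Z).
Proof. by elim: k j => [|k IH] j /=; [rewrite subr0 | rewrite IH; congr (x i _); lia]. Qed.

Lemma lball_lmult_iter n j k f :
  n <= j + k%:Z -> lball j f -> lball n (iter k (@lmult p) f).
Proof. by move=> n_le fj l l_lt; rewrite lmult_iter_coef; apply: fj; lia. Qed.

Lemma vball_tau_iter j k x : vball j (iter k (@tau p d) x) <-> vball (j - k%:Z) x.
Proof.
split=> xj i l l_lt.
  by have := xj i (l + k%:Z); rewrite tau_iter_coef addrK; apply; lia.
by rewrite tau_iter_coef; apply: xj; lia.
Qed.

Lemma tauinv_tau x : tauinv (tau x) = x.
Proof. by apply: lvec_ext => i j /=; congr (x i _); lia. Qed.

Lemma tauinv_tau_iter k x : iter k (@tauinv p d) (iter k (@tau p d) x) = x.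
Proof. by elim: k x => [|k IH] x //; rewrite iterSr iterS tauinv_tau IH. Qed.

Lemma tau_vball m x : vball m x -> vball m (tau x).
Proof. by move=> xm i l l_lt /=; apply: xm; lia. Qed.

(* ... but not onto it: the vector with a single coefficient 1 at t^m is missed. *)
Lemma tau_vball_proper m : (0 < d)%N ->
  exists x, vball m x /\ ~ exists2 y, vball m y & tau y = x.
Proof.
move=> d_gt0; pose i0 : 'I_d := Ordinal d_gt0.
have e_lb : exists N : int, forall l : int, l < N ->
    (fun l : int => if l == m then (1 : 'F_p) else 0) l = 0.
  by exists m => l l_lt /=; case: eqP => // l_m; lia.
pose x := fun i => if i == i0 then Laurent e_lb else lzero p.
exists x; split=> [i l l_lt | [y ym /(congr1 (fun z : lvec p d => z i0 m))]].
  by rewrite /x; case: (i == i0) => //=; case: eqP => // l_m; lia.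
rewrite /x eqxx /= eqxx ym; last by lia.
by move=> /eqP; rewrite eq_sym oner_eq0.
Qed.

End Shift.

Section Action.
Variables (p d : nat) (phi : laurent p -> lvec p d -> lvec p d).
Hypothesis phi_aut : forall f, is_aut (phi f).
Hypothesis phi_hom : forall f g x, phi (ladd f g) x = phi f (phi g x).
Hypothesis phi_tau : forall f x, phi (lmult f) x = tau (phi f (tauinv x)).

Definition stabilises (a : lvec p d -> lvec p d) (S : lvec p d -> Prop) : Prop :=
  forall x, S x <-> S (a x).

Lemma stabilises_image (a b : lvec p d -> lvec p d) S :
  cancel b a -> stabilises a S -> forall y, S y <-> exists2 x, S x & a x = y.
Proof.
move=> ba aS y; split=> [Sy | [x Sx <-]]; last exact: (aS x).1.
by exists (b y); rewrite ?ba //; apply/(aS _); rewrite ba.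
Qed.

Lemma braconnier_stabilises m (g : lvec p d -> lvec p d) :
  braconnier_nbhd (vball m) (vball m) g -> stabilises g (vball m).
Proof.
move=> gN x; split=> [xm | gxm]; first exact: vsub_ball (proj1 (gN x xm)) xm.
exact: vsub_ball (proj2 (gN _ gxm) x erefl) gxm.
Qed.

Lemma phi_zero x : phi (lzero p) x = x.
Proof.
have [_ [b [phiK _]]] := phi_aut (lzero p).
have zz : ladd (lzero p) (lzero p) = lzero p by apply: laurent_ext => k /=; rewrite addr0.
by have := phi_hom (lzero p) (lzero p) x; rewrite zz => /(congr1 b); rewrite !phiK.
Qed.

Lemma phi_small_stabilises m : braconnier_continuous phi ->
  exists n : int, forall f, lball n f -> stabilises (phi f) (vball m).
Proof.
move=> phi_cont.
have [|n near0] := phi_cont (lzero p) _ (vball m) (@vball_compact p d m); first by exists m.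
exists n => f fn.
have [|g [_ [gN phi_g]]] := near0 f; first by move=> l l_lt /=; rewrite fn // subr0.
by move=> x; rewrite phi_g phi_zero; apply: braconnier_stabilises.
Qed.

Lemma phi_tau_iter k f x :
  phi (iter k (@lmult p) f) x = iter k (@tau p d) (phi f (iter k (@tauinv p d) x)).
Proof. by elim: k x => [|k IH] x //; rewrite iterS phi_tau IH iterS iterSr. Qed.

Lemma stabilises_rescale j k f :
  stabilises (phi (iter k (@lmult p) f)) (vball j) ->
  stabilises (phi f) (vball (j - k%:Z)).
Proof.
move=> stab x; rewrite -!vball_tau_iter stab phi_tau_iter tauinv_tau_iter.
by split.
Qed.

End Action.

Theorem mainTheorem11 (p : nat) (hp : prime p) (d : nat) (hd : (0 < d)%N)
  (phi : laurent p -> lvec p d -> lvec p d)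
  (phi_aut : forall f, is_aut (phi f))
  (phi_hom : forall f g x, phi (ladd f g) x = phi f (phi g x))
  (phi_cont : braconnier_continuous phi)
  (phi_tau : forall f x, phi (lmult f) x = tau (phi f (tauinv x))) :
  exists V : lvec p d -> Prop,
    compact_open_subgroup V /\
    (forall f, in_power_series f ->
       forall y, V y <-> exists2 x, V x & phi f x = y) /\
    (forall x, V x -> V (tau x)) /\
    (exists x, V x /\ ~ exists2 y, V y & tau y = x).
Proof.
have [n small_stab] := phi_small_stabilises phi_aut phi_hom 0 phi_cont.
pose k := absz n.
have stab f : in_power_series f -> stabilises (phi f) (vball (0 - k%:Z)).
  move=> f0; apply: stabilises_rescale => //; apply/small_stab.
  by apply: lball_lmult_iter f0; rewrite add0r /k; lia.
exists (vball (0 - k%:Z)); split; last split; last split.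
- by split; [apply: vball_subgroup | split; [apply: vball_open | apply: vball_compact]].
- move=> f f0; have [_ [b [_ [phib _]]]] := phi_aut f.
  exact: stabilises_image phib (stab f f0).
- exact: tau_vball.
- exact: tau_vball_proper.
Qed.
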